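(* Fix real numbers $\lambda>0$, $\beta>0$, $\alpha>1$ and $T_{cl}>0$. Let $(N_k)_{k\ge1}$ be positive integers with $N_k\to\infty$, and let $m_k,c_k$ be positive integers with $m_kc_k=N_k$, $m_k\to\infty$ and $c_k\to\infty$. Define $$a_k=\frac{\lambda\beta\alpha m_k}{\alpha m_k-1},\qquad P_{b,k}=\frac{a_k^{c_k}/c_k!}{\sum_{j=0}^{c_k}a_k^{j}/j!},\qquad \mathbb{E}[T_{\text{sys},k}]=\frac{\beta\alpha m_k}{\alpha m_k-1}(1-P_{b,k})+T_{cl}\,P_{b,k}.$$ Then $\lim_{k\to\infty}\mathbb{E}[T_{\text{sys},k}]=\beta$.
   Context: Model: an edge system with $N$ workers is split into $c$ groups of $m$ workers ($N=mc$); jobs arrive as a Poisson process of rate $\lambda$, each job is replicated on the $m$ workers of a free group, and jobs finding all groups busy are blocked and sent to the cloud, where they take expected time $T_{cl}$. Worker service times are Pareto $\mathrm{Pareto}(\beta,\alpha)$ ($\Pr(X>x)=(\beta/x)^\alpha$ for $x\ge\beta$, $\alpha>1$), so the job-computing time (minimum of $m$ copies) has mean $\frac{\beta m\alpha}{m\alpha-1}$. The blocking probability is the Erlang B formula with $c$ servers and offered load $\lambda\frac{\beta m\alpha}{m\alpha-1}$, and the average system time is $(1-P_b)\mathbb{E}[T_{\text{job}}]+P_b T_{cl}$. *)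

From Stdlib Require Import Reals Lra.
From Coquelicot Require Import Coquelicot.
Open Scope R_scope.

Definition mean_job (beta alpha : R) (m : nat) : R :=
  beta * alpha * INR m / (alpha * INR m - 1).

Definition load (lambda beta alpha : R) (m : nat) : R :=
  lambda * beta * alpha * INR m / (alpha * INR m - 1).

Definition erlangB (c : nat) (a : R) : R :=
  (a ^ c / INR (Factorial.fact c)) / sum_f_R0 (fun j => a ^ j / INR (Factorial.fact j)) c.

Definition sys_time (lambda beta alpha Tcl : R) (m c : nat) : R :=
  let Pb := erlangB c (load lambda beta alpha m) in
  mean_job beta alpha m * (1 - Pb) + Tcl * Pb.

(* The mean job time [beta * x / (x - 1)], with [x = alpha * m], tends to [beta]
   as [m -> oo], and the offered load stays below its value at [m = 1].  Since
   the Erlang B sum contains the term [1], the blocking probability is at most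
   [a^c / c!] for the load [a], which a bounded load drives to [0] as [c -> oo]. *)
From Stdlib Require Import Reals Lra.
From Coquelicot Require Import Coquelicot.
Open Scope R_scope.

Lemma filterlim_nat_of_INR_p_infty (c : nat -> nat) :
  is_lim_seq (fun k => INR (c k)) p_infty -> filterlim c eventually eventually.
Proof.
  intros Hc P [n0 HP].
  apply is_lim_seq_spec in Hc.
  destruct (Hc (INR n0)) as [k0 Hk0].
  exists k0; intros k Hk.
  apply HP, Nat.lt_le_incl, INR_lt, Hk0, Hk.
Qed.

Lemma is_lim_seq_pow_div_fact (A : R) :
  is_lim_seq (fun n => A ^ n / INR (Factorial.fact n)) 0.
Proof. apply is_lim_seq_Reals, cv_speed_pow_fact. Qed.

Lemma is_lim_seq_div_pred (x : nat -> R) :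
  is_lim_seq x p_infty -> is_lim_seq (fun n => x n / (x n - 1)) 1.
Proof.
  intros Hx.
  assert (Hinv : is_lim_seq (fun n => / (x n - 1)) 0).
  { apply (is_lim_seq_inv _ p_infty); [|discriminate].
    eapply is_lim_seq_minus; [exact Hx | apply is_lim_seq_const | constructor]. }
  apply is_lim_seq_ext_loc with (fun n => 1 + / (x n - 1)).
  - apply is_lim_seq_spec in Hx.
    destruct (Hx 1) as [n0 Hn0].
    exists n0; intros n Hn.
    specialize (Hn0 n Hn).
    field; lra.
  - replace (Finite 1) with (Finite (1 + 0)) by (f_equal; ring).
    apply is_lim_seq_plus'; [apply is_lim_seq_const | exact Hinv].
Qed.

Lemma div_pred_antitone (x y : R) : 1 < y -> y <= x -> x / (x - 1) <= y / (y - 1).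
Proof.
  intros Hy Hyx.
  apply Rmult_le_reg_r with ((x - 1) * (y - 1)); [nra|].
  replace (x / (x - 1) * ((x - 1) * (y - 1))) with (x * (y - 1)) by (field; lra).
  replace (y / (y - 1) * ((x - 1) * (y - 1))) with (y * (x - 1)) by (field; lra).
  lra.
Qed.

Lemma mean_job_factor (beta alpha : R) (m : nat) :
  mean_job beta alpha m = beta * (alpha * INR m / (alpha * INR m - 1)).
Proof. unfold mean_job, Rdiv; ring. Qed.

Lemma load_mean_job (lambda beta alpha : R) (m : nat) :
  load lambda beta alpha m = lambda * mean_job beta alpha m.
Proof. unfold load, mean_job, Rdiv; ring. Qed.

Lemma is_lim_seq_mean_job (beta alpha : R) (m : nat -> nat) :
  0 < alpha -> is_lim_seq (fun k => INR (m k)) p_infty ->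
  is_lim_seq (fun k => mean_job beta alpha (m k)) beta.
Proof.
  intros Ha Hm.
  apply is_lim_seq_ext with (fun k => beta * (alpha * INR (m k) / (alpha * INR (m k) - 1))).
  { intros k; symmetry; apply mean_job_factor. }
  replace (Finite beta) with (Rbar_mult beta 1) by (simpl; f_equal; ring).
  apply is_lim_seq_scal_l, is_lim_seq_div_pred.
  replace p_infty with (Rbar_mult alpha p_infty)
    by (rewrite Rbar_mult_comm; apply is_Rbar_mult_unique, is_Rbar_mult_p_infty_pos; exact Ha).
  apply is_lim_seq_scal_l, Hm.
Qed.

Lemma mean_job_bounds (beta alpha : R) (m : nat) :
  0 <= beta -> 1 < alpha -> (0 < m)%nat ->
  0 <= mean_job beta alpha m <= beta * (alpha / (alpha - 1)).
Proof.
  intros Hb Ha Hm.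
  assert (Hm1 : 1 <= INR m) by (apply (le_INR 1); exact Hm).
  rewrite mean_job_factor; split.
  - apply Rmult_le_pos; [exact Hb|].
    apply Rlt_le, Rdiv_lt_0_compat; nra.
  - apply Rmult_le_compat_l; [exact Hb|].
    apply div_pred_antitone; nra.
Qed.

Lemma erlang_sum_ge_1 (c : nat) (a : R) :
  0 <= a -> 1 <= sum_f_R0 (fun j => a ^ j / INR (Factorial.fact j)) c.
Proof.
  intros Ha; induction c as [|c IH].
  - simpl; lra.
  - assert (0 <= a ^ S c / INR (Factorial.fact (S c))).
    { apply Rdiv_le_0_compat; [apply pow_le, Ha | apply lt_0_INR, Factorial.lt_O_fact]. }
    rewrite tech5; lra.
Qed.

Lemma erlangB_bounds (c : nat) (a : R) :
  0 <= a -> 0 <= erlangB c a <= a ^ c / INR (Factorial.fact c).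
Proof.
  intros Ha; unfold erlangB.
  assert (Hs := erlang_sum_ge_1 c a Ha).
  assert (Hp : 0 <= a ^ c / INR (Factorial.fact c)).
  { apply Rdiv_le_0_compat; [apply pow_le, Ha | apply lt_0_INR, Factorial.lt_O_fact]. }
  split.
  - apply Rdiv_le_0_compat; lra.
  - unfold Rdiv at 1.
    rewrite <- (Rmult_1_r (a ^ c / INR (Factorial.fact c))) at 2.
    apply Rmult_le_compat_l; [exact Hp|].
    rewrite <- Rinv_1; apply Rinv_le_contravar; lra.
Qed.

Lemma is_lim_seq_erlangB_bounded_load (A : R) (a : nat -> R) (c : nat -> nat) :
  (forall k, 0 <= a k <= A) -> is_lim_seq (fun k => INR (c k)) p_infty ->
  is_lim_seq (fun k => erlangB (c k) (a k)) 0.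
Proof.
  intros Ha Hc.
  apply is_lim_seq_le_le with (fun _ => 0) (fun k => A ^ c k / INR (Factorial.fact (c k))).
  - intros k.
    destruct (erlangB_bounds (c k) (a k) (proj1 (Ha k))) as [H0 H1].
    split; [exact H0|].
    apply Rle_trans with (1 := H1).
    apply Rmult_le_compat_r.
    + apply Rlt_le, Rinv_0_lt_compat, lt_0_INR, Factorial.lt_O_fact.
    + apply pow_incr, Ha.
  - apply is_lim_seq_const.
  - apply (is_lim_seq_subseq (fun n => A ^ n / INR (Factorial.fact n))).
    + apply filterlim_nat_of_INR_p_infty, Hc.
    + apply is_lim_seq_pow_div_fact.
Qed.

Theorem lemma3 (lambda beta alpha Tcl : R) (N m c : nat -> nat) :
  0 < lambda -> 0 < beta -> 1 < alpha -> 0 < Tcl ->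
  (forall k, (0 < N k)%nat) -> (forall k, (0 < m k)%nat) -> (forall k, (0 < c k)%nat) ->
  (forall k, (m k * c k = N k)%nat) ->
  is_lim_seq (fun k => INR (N k)) p_infty ->
  is_lim_seq (fun k => INR (m k)) p_infty ->
  is_lim_seq (fun k => INR (c k)) p_infty ->
  is_lim_seq (fun k => sys_time lambda beta alpha Tcl (m k) (c k)) beta.
Proof.
  intros Hl Hb Ha _ _ Hm _ _ _ Lm Lc.
  assert (Hmean : is_lim_seq (fun k => mean_job beta alpha (m k)) beta)
    by (apply is_lim_seq_mean_job; [lra | exact Lm]).
  assert (Hblock : is_lim_seq
            (fun k => erlangB (c k) (load lambda beta alpha (m k))) 0).
  { apply is_lim_seq_erlangB_bounded_load with (lambda * (beta * (alpha / (alpha - 1)))).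
    - intros k; rewrite load_mean_job.
      destruct (mean_job_bounds beta alpha (m k)) as [H0 H1]; [lra | lra | apply Hm |].
      split; [apply Rmult_le_pos | apply Rmult_le_compat_l]; lra.
    - exact Lc. }
  unfold sys_time.
  replace (Finite beta) with (Finite (beta * (1 - 0) + Tcl * 0)) by (f_equal; ring).
  apply is_lim_seq_plus'.
  - apply is_lim_seq_mult'; [exact Hmean|].
    apply is_lim_seq_minus'; [apply is_lim_seq_const | exact Hblock].
  - apply is_lim_seq_mult'; [apply is_lim_seq_const | exact Hblock].
Qed.
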